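(* Let $x_1,x_{-1}$ be continuous variables and $n\in\mathbb{Z}$ a discrete variable. For spectral parameters $k,k'\in\mathbb{C}$ set $$\rho_n(k)=\mathrm{e}^{kx_1+k^{-1}x_{-1}}k^n,\qquad \sigma_n(k')=\mathrm{e}^{k'x_1+k'^{-1}x_{-1}}(-k')^{-n},\qquad \Omega(k,k')=\frac{1}{k+k'}.$$ Let $\mathrm{d}\zeta(k,k')$ be an arbitrary integration measure and $D$ an arbitrary integration domain in the $(k,k')$-space. Let $\boldsymbol{u}_n(k)$ (an infinite column vector depending on $x_1,x_{-1},n$ and $k$) be any solution of the linear integral equation $$\boldsymbol{u}_n(k)+\iint_D\mathrm{d}\zeta(l,l')\,\rho_n(k)\Omega(k,l')\sigma_n(l')\,\boldsymbol{u}_n(l)=\rho_n(k)\boldsymbol{c}(k),$$ and define the infinite matrix $$\boldsymbol{U}_n=\iint_D\mathrm{d}\zeta(k,k')\,\boldsymbol{u}_n(k)\,{}^{t}\boldsymbol{c}(k')\,\sigma_n(k').$$ Then $\varphi_n:=\ln\bigl(1-\boldsymbol{U}_n^{(0,-1)}\bigr)$ is a solution of the two-dimensional Toda equation $$\partial_1\partial_{-1}\varphi_n=\mathrm{e}^{\varphi_n-\varphi_{n-1}}-\mathrm{e}^{\varphi_{n+1}-\varphi_n},$$ where $\partial_{\pm1}=\partial/\partial x_{\pm1}$. Moreover, the wave function $\phi_n:=[\boldsymbol{u}_n(k)]^{(0)}$ satisfies the linear problem $$\partial_1\phi_n=(\partial_1\varphi_n)\phi_n+\phi_{n+1},\qquad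 \partial_{-1}\phi_n=\mathrm{e}^{\varphi_n-\varphi_{n-1}}\phi_{n-1},\qquad n\in\mathbb{Z}.$$
   Context: Infinite vectors and matrices are indexed by $\mathbb{Z}$, with the usual (formal) rules of addition and multiplication; all infinite sums occurring are assumed convergent. $\boldsymbol{c}(k)={}^{t}(\cdots,k^{-1},1,k,\cdots)$ is the infinite column vector whose $i$-th component is $k^i$ ($i\in\mathbb{Z}$), and ${}^{t}\boldsymbol{c}(k')$ is the infinite row vector with $i$-th component $k'^i$; ${}^{t}(\cdot)$ denotes transpose. $\boldsymbol{u}\,{}^{t}\boldsymbol{v}$ denotes the infinite matrix with $(i,j)$-entry $u_iv_j$. For an infinite matrix $\boldsymbol{U}$, $\boldsymbol{U}^{(i,j)}$ denotes its $(i,j)$-entry, and $[\boldsymbol{u}]^{(i)}$ denotes the $i$-th component of an infinite vector. It is assumed that the homogeneous version of the linear integral equation (right-hand side zero) has only the zero solution. *)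

From mathcomp Require Import all_boot all_order all_algebra.
From mathcomp Require Import all_classical all_reals all_analysis.
From mathcomp Require Export complex.
Import GRing.Theory Num.Theory numFieldNormedType.Exports.

Set Implicit Arguments.
Unset Strict Implicit.
Unset Printing Implicit Defensive.

Local Open Scope ring_scope.
Local Open Scope complex_scope.

Section Toda.
Variable R : realType.

Definition cexp (z : R[i]) : R[i] :=
  Complex (expR (complex.Re z) * cos (complex.Im z))
          (expR (complex.Re z) * sin (complex.Im z)).

(* plane-wave factors and Cauchy kernel; x1, xm stand for x_1, x_{-1} *)
Definition rho (n : int) (x1 xm : R) (k : R[i]) : R[i] :=
  cexp (k * x1%:C + k^-1 * xm%:C) * k ^ n.
Definition sigma (n : int) (x1 xm : R) (k' : R[i]) : R[i] :=
  cexp (k' * x1%:C + k'^-1 * xm%:C) * (- k') ^ (- n).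
Definition Omega (k k' : R[i]) : R[i] := (k + k')^-1.

Definition cderivable (f : R -> R[i]) (x : R) : Prop :=
  derivable (fun y => complex.Re (f y)) x 1 /\
  derivable (fun y => complex.Im (f y)) x 1.
Definition cderive (f : R -> R[i]) (x : R) : R[i] :=
  Complex (derive1 (fun y : R => complex.Re (f y)) x) (derive1 (fun y : R => complex.Im (f y)) x).
Definition ccontinuous (f : R -> R[i]) : Prop :=
  continuous (fun y : R => complex.Re (f y)) /\ continuous (fun y : R => complex.Im (f y)).
Definition pd1 (F : R -> R -> R[i]) (x1 xm : R) : R[i] := cderive (fun y => F y xm) x1.
Definition pdm (F : R -> R -> R[i]) (x1 xm : R) : R[i] := cderive (fun y => F x1 y) xm.

Definition cintegrable d (T : measurableType d) (mu : {measure set T -> \bar R})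
  (D : set T) (f : T -> R[i]) : Prop :=
  mu.-integrable D (fun t => (complex.Re (f t))%:E) /\
  mu.-integrable D (fun t => (complex.Im (f t))%:E).
Definition cint d (T : measurableType d) (mu : {measure set T -> \bar R})
  (D : set T) (f : T -> R[i]) : R[i] :=
  Complex (Rintegral mu D (fun t => complex.Re (f t)))
          (Rintegral mu D (fun t => complex.Im (f t))).

(* The integration  \iint_D d zeta(l,l') F(l,l') : the points of the domain D
   are points t of an arbitrary measure space, with coordinates
   (l,l') = (K t, K' t), and the (complex) measure is d zeta = w d mu. *)
Definition zintegrable d (T : measurableType d) (mu : {measure set T -> \bar R})
  (D : set T) (w K K' : T -> R[i]) (F : R[i] -> R[i] -> R[i]) : Prop :=
  cintegrable mu D (fun t => w t * F (K t) (K' t)).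
Definition zint d (T : measurableType d) (mu : {measure set T -> \bar R})
  (D : set T) (w K K' : T -> R[i]) (F : R[i] -> R[i] -> R[i]) : R[i] :=
  cint mu D (fun t => w t * F (K t) (K' t)).

Definition diff_under1 d (T : measurableType d) (mu : {measure set T -> \bar R})
  (D : set T) (w K K' : T -> R[i]) (F : R -> R -> R[i] -> R[i] -> R[i]) : Prop :=
  forall x1 xm,
    (forall t, D t -> cderivable (fun y => F y xm (K t) (K' t)) x1) /\
    zintegrable mu D w K K' (fun l l' => pd1 (fun a b => F a b l l') x1 xm) /\
    cderivable (fun y => zint mu D w K K' (F y xm)) x1 /\
    pd1 (fun a b => zint mu D w K K' (F a b)) x1 xm =
      zint mu D w K K' (fun l l' => pd1 (fun a b => F a b l l') x1 xm).
Definition diff_underm d (T : measurableType d) (mu : {measure set T -> \bar R})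
  (D : set T) (w K K' : T -> R[i]) (F : R -> R -> R[i] -> R[i] -> R[i]) : Prop :=
  forall x1 xm,
    (forall t, D t -> cderivable (fun y => F x1 y (K t) (K' t)) xm) /\
    zintegrable mu D w K K' (fun l l' => pdm (fun a b => F a b l l') x1 xm) /\
    cderivable (fun y => zint mu D w K K' (F x1 y)) xm /\
    pdm (fun a b => zint mu D w K K' (F a b)) x1 xm =
      zint mu D w K K' (fun l l' => pdm (fun a b => F a b l l') x1 xm).

Definition admissible d (T : measurableType d) (D : set T) (K' : T -> R[i])
  (k : R[i]) : Prop :=
  k != 0 /\ forall t, D t -> k + K' t != 0.

(* integrand of the linear integral equation, for the i-th component *)
Definition eq_integrand (u : int -> R -> R -> R[i] -> int -> R[i])
  (n : int) (k : R[i]) (i : int) (x1 xm : R) (l l' : R[i]) : R[i] :=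
  rho n x1 xm k * Omega k l' * sigma n x1 xm l' * u n x1 xm l i.
Definition U_integrand (u : int -> R -> R -> R[i] -> int -> R[i])
  (n i j : int) (x1 xm : R) (l l' : R[i]) : R[i] :=
  u n x1 xm l i * l' ^ j * sigma n x1 xm l'.
Definition Umat d (T : measurableType d) (mu : {measure set T -> \bar R})
  (D : set T) (w K K' : T -> R[i]) (u : int -> R -> R -> R[i] -> int -> R[i])
  (n : int) (x1 xm : R) (i j : int) : R[i] :=
  zint mu D w K K' (U_integrand u n i j x1 xm).

End Toda.

(* The integral equation has at most one solution, so a function satisfying
   it with right-hand side [a rho_n(k) k^p + b rho_n(k) k^q] is
   [a u_n^(p) + b u_n^(q)].  Shifting [n], or differentiating in [x_1] or
   [x_{-1}], turns the equation for [u_n] into such an equation, because the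
   Cauchy kernel reproduces itself up to a rank-one term ([(k + l') Omega(k,l')
   = 1]).  This gives the shift relations
   [u_{n+1}^(i) = u_n^(i+1) - U_{n+1}^(i,0) u_n^(0)],
   [u_{n-1}^(0) = (1 - U_{n-1}^(0,-1)) u_n^(-1)] and the dispersion relations
   [d_1 u_n^(i) = u_n^(i+1) - U_n^(i,0) u_n^(0)],
   [d_{-1} u_n^(i) = u_n^(i-1) - U_n^(i,-1) u_n^(-1)];
   integrating them against [l'^j sigma_n(l')] gives closed relations for the
   entries of [U_n].  Since [e^phi_n = 1 - U_n^(0,-1)], they yield
   [d_1 phi_n = U_{n+1}^(0,0) - U_n^(0,0)] and
   [e^(phi_n - phi_{n-1}) = (1 - U_n^(0,-1)) (1 - U_n^(-1,0))], from which the
   linear problem and the Toda equation follow by algebra. *)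

From mathcomp Require Import all_boot all_order all_algebra.
From mathcomp Require Import all_classical all_reals all_analysis.
From mathcomp Require Import complex.
From mathcomp Require Import ring.
Import Order.TTheory GRing.Theory Num.Theory numFieldNormedType.Exports.
Local Open Scope ring_scope.
Local Open Scope complex_scope.
Set Implicit Arguments.
Unset Strict Implicit.
Unset Printing Implicit Defensive.

Section ComplexCalculus.
Variable R : realType.
Notation C := R[i].

Lemma cReD (a b : C) : complex.Re (a + b) = complex.Re a + complex.Re b.
Proof. by case: a; case: b. Qed.
Lemma cImD (a b : C) : complex.Im (a + b) = complex.Im a + complex.Im b.
Proof. by case: a; case: b. Qed.
Lemma cReN (a : C) : complex.Re (- a) = - complex.Re a.
Proof. by case: a. Qed.
Lemma cImN (a : C) : complex.Im (- a) = - complex.Im a.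
Proof. by case: a. Qed.
Lemma cReM (a b : C) :
  complex.Re (a * b) = complex.Re a * complex.Re b - complex.Im a * complex.Im b.
Proof. by case: a; case: b. Qed.
Lemma cImM (a b : C) :
  complex.Im (a * b) = complex.Re a * complex.Im b + complex.Im a * complex.Re b.
Proof. by case: a; case: b. Qed.
Lemma cReV (z : C) :
  complex.Re z^-1 = complex.Re z / (complex.Re z ^+ 2 + complex.Im z ^+ 2).
Proof. by case: z. Qed.
Lemma cImV (z : C) :
  complex.Im z^-1 = - (complex.Im z / (complex.Re z ^+ 2 + complex.Im z ^+ 2)).
Proof. by case: z. Qed.

Lemma normsq_neq0 (z : C) : z != 0 -> complex.Re z ^+ 2 + complex.Im z ^+ 2 != 0.
Proof.
case: z => a b /=; apply: contra => /eqP.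
by move/eqP; rewrite paddr_eq0 ?sqr_ge0 // !sqrf_eq0 => /andP[/eqP-> /eqP->].
Qed.

Lemma polar_normsq (a b : R) :
  (expR a * cos b) ^+ 2 + (expR a * sin b) ^+ 2 = expR (a + a).
Proof. by rewrite !exprMn -mulrDr cos2Dsin2 mulr1 expr2 expRD. Qed.

Lemma cexpD (a b : C) : cexp (a + b) = cexp a * cexp b.
Proof.
rewrite /cexp cReD cImD expRD cosD sinD; case: a => a1 a2; case: b => b1 b2 /=.
congr (Complex _ _); ring.
Qed.

Lemma cexp0 : cexp (0 : C) = 1.
Proof. by rewrite /cexp /= expR0 cos0 sin0 mulr1 mulr0. Qed.

Lemma cexp_neq0 (z : C) : cexp z != 0.
Proof.
apply/negP => /eqP/(congr1 (fun c => complex.Re c ^+ 2 + complex.Im c ^+ 2)).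
by rewrite /= polar_normsq expr0n addr0 => /eqP; rewrite gt_eqF // expR_gt0.
Qed.

Lemma cexpN (a : C) : cexp (- a) = (cexp a)^-1.
Proof.
apply: (@mulIf _ (cexp a)); first exact: cexp_neq0.
by rewrite -cexpD addNr cexp0 mulVf // cexp_neq0.
Qed.

(* Since [p^2 + q^2 = e^(2a)], [a = ln (p^2 + q^2) / 2]. *)
Lemma is_derive_log_modulus (a b p q : R -> R) x dp dq :
  (forall y, p y = expR (a y) * cos (b y)) ->
  (forall y, q y = expR (a y) * sin (b y)) ->
  is_derive x (1:R) p dp -> is_derive x (1:R) q dq ->
  is_derive x (1:R) a ((dp * p x + dq * q x) / (p x ^+ 2 + q x ^+ 2)).
Proof.
move=> hp hq dP dQ.
have normsq y : p y * p y + q y * q y = expR (a y + a y).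
  by rewrite hp hq -!expr2 polar_normsq.
have -> : a = cst (2^-1 : R) * (@ln R \o (p * p + q * q)).
  by apply/funext => y; rewrite /= !fctE normsq expRK; field.
have Npos : 0 < (p * p + q * q) x by rewrite !fctE normsq expR_gt0.
apply: is_derive_eq (is_deriveM (is_derive_cst (2^-1 : R) x 1)
  (is_derive1_comp (is_derive1_ln Npos)
    (is_deriveD (is_deriveM dP dP) (is_deriveM dQ dQ)))) _.
rewrite /GRing.scale /= !fctE !expr2; field.
by move: Npos; rewrite !fctE => /lt0r_neq0.
Qed.

(* Near [x] the continuous argument [b] equals [b x + atan (Q / P)] with
   [P + i Q = (p + i q) * conj (p x + i q x)]. *)
Lemma is_derive_continuous_argument (a b p q : R -> R) x dp dq :
  (forall y, p y = expR (a y) * cos (b y)) ->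
  (forall y, q y = expR (a y) * sin (b y)) ->
  {for x, continuous b} ->
  is_derive x (1:R) p dp -> is_derive x (1:R) q dq ->
  is_derive x (1:R) b ((dq * p x - dp * q x) / (p x ^+ 2 + q x ^+ 2)).
Proof.
move=> hp hq hc dP dQ.
pose P := p * cst (p x) + q * cst (q x).
pose Q := q * cst (p x) - p * cst (q x).
have Px : P x = p x ^+ 2 + q x ^+ 2 by rewrite /P !fctE -!expr2.
have Px0 : P x != 0 by rewrite Px hp hq polar_normsq gt_eqF ?expR_gt0.
have Qx : Q x = 0 by rewrite /Q !fctE /=; ring.
have dPP : is_derive x 1 P _ := is_deriveD (is_deriveM dP (is_derive_cst (p x) x 1))
                       (is_deriveM dQ (is_derive_cst (q x) x 1)).
have dQQ : is_derive x 1 Q _ := is_deriveB (is_deriveM dQ (is_derive_cst (p x) x 1))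
                       (is_deriveM dP (is_derive_cst (q x) x 1)).
have dA := is_derive1_comp (is_derive1_atan _) (is_deriveM dQQ (is_deriveV Px0 dPP)).
suff near_b : \forall y \near x,
    (cst (b x) + (atan \o (Q * (fun y => (P y)^-1)))) y = b y.
  apply: is_derive_eq (near_eq_is_derive near_b
    (is_deriveD (is_derive_cst (b x) x 1) dA)) _.
  by rewrite !fctE Qx /GRing.scale /= -Px; field.
have pi2 : (0:R) < pi / 2 by rewrite divr_gt0 // pi_gt0.
near=> y.
have : `|b x - b y| < pi / 2 by near: y; apply: cvgr_dist_lt.
rewrite distrC ltr_norml => /andP[lby uby].
have QPE : Q y * (P y)^-1 = tan (b y - b x).
  have E0 : expR (a y) * expR (a x) != 0 by rewrite gt_eqF // mulr_gt0 ?expR_gt0.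
  rewrite /Q /P !fctE /= !hp !hq /tan sinB cosB.
  transitivity ((expR (a y) * expR (a x)) * (sin (b y) * cos (b x) - cos (b y) * sin (b x)) /
    ((expR (a y) * expR (a x)) * (cos (b y) * cos (b x) + sin (b y) * sin (b x)))).
    by congr (_ / _); ring.
  by rewrite -mulf_div divff ?mul1r.
rewrite !fctE /= QPE tanK; first by rewrite addrC subrK.
by rewrite in_itv /= lby uby.
Unshelve. all: by end_near.
Qed.

Lemma eq_is_derive (f g : R -> R) x df :
  f =1 g -> is_derive x (1:R) f df -> is_derive x (1:R) g df.
Proof. by move=> /funext ->. Qed.

Definition is_cderive (f : R -> C) (x : R) (df : C) : Prop :=
  is_derive x (1:R) (fun y => complex.Re (f y)) (complex.Re df) /\
  is_derive x (1:R) (fun y => complex.Im (f y)) (complex.Im df).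

Lemma is_cderive_cderivable f x df : is_cderive f x df -> cderivable f x.
Proof. by case=> [[? _] [? _]]. Qed.

Lemma cderiveE f x df : is_cderive f x df -> cderive f x = df.
Proof. by case=> [[_ h1] [_ h2]]; rewrite /cderive !derive1E h1 h2; case: df {h1 h2}. Qed.

Lemma cderivableP f x : cderivable f x -> is_cderive f x (cderive f x).
Proof. by case=> h1 h2; split; rewrite /= derive1E; apply: derivableP. Qed.

Lemma is_cderive_unique f x df1 df2 :
  is_cderive f x df1 -> is_cderive f x df2 -> df1 = df2.
Proof. by move=> /cderiveE <- /cderiveE <-. Qed.

Lemma eq_is_cderive f g x df : f =1 g -> is_cderive f x df -> is_cderive g x df.
Proof. by move=> /funext ->. Qed.

Lemma is_cderive_eq f x df1 df2 : is_cderive f x df1 -> df1 = df2 -> is_cderive f x df2.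
Proof. by move=> h <-. Qed.

Lemma is_cderive_cst (c : C) x : is_cderive (fun _ => c) x 0.
Proof. by split; apply: is_derive_cst. Qed.

Lemma is_cderive_id x : is_cderive (fun y => y%:C) x 1.
Proof. by split; [apply: is_derive_id | apply: is_derive_cst]. Qed.

Lemma is_cderiveD f g x df dg : is_cderive f x df -> is_cderive g x dg ->
  is_cderive (fun y => f y + g y) x (df + dg).
Proof.
case=> f1 f2 [g1 g2]; split.
- by rewrite cReD; apply: eq_is_derive (is_deriveD f1 g1) => y; rewrite cReD.
- by rewrite cImD; apply: eq_is_derive (is_deriveD f2 g2) => y; rewrite cImD.
Qed.

Lemma is_cderiveN f x df : is_cderive f x df -> is_cderive (fun y => - f y) x (- df).
Proof.
case=> f1 f2; split.
- by rewrite cReN; apply: eq_is_derive (is_deriveN f1) => y; rewrite cReN.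
- by rewrite cImN; apply: eq_is_derive (is_deriveN f2) => y; rewrite cImN.
Qed.

Lemma is_cderiveB f g x df dg : is_cderive f x df -> is_cderive g x dg ->
  is_cderive (fun y => f y - g y) x (df - dg).
Proof. by move=> hf /is_cderiveN; apply: is_cderiveD. Qed.

Lemma is_cderiveM f g x df dg : is_cderive f x df -> is_cderive g x dg ->
  is_cderive (fun y => f y * g y) x (df * g x + f x * dg).
Proof.
case=> f1 f2 [g1 g2]; split.
- apply: is_derive_eq (eq_is_derive _ (is_deriveB (is_deriveM f1 g1) (is_deriveM f2 g2))) _.
    by move=> y; rewrite cReM.
  by rewrite cReD !cReM /GRing.scale /=; ring.
- apply: is_derive_eq (eq_is_derive _ (is_deriveD (is_deriveM f1 g2) (is_deriveM f2 g1))) _.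
    by move=> y; rewrite cImM.
  by rewrite cImD !cImM /GRing.scale /=; ring.
Qed.

Lemma is_cderiveMl (c : C) f x df : is_cderive f x df ->
  is_cderive (fun y => c * f y) x (c * df).
Proof. by move=> h; apply: is_cderive_eq (is_cderiveM (is_cderive_cst c x) h) _; ring. Qed.

Lemma is_cderive_cexp f x df : is_cderive f x df ->
  is_cderive (fun y => cexp (f y)) x (cexp (f x) * df).
Proof.
case=> f1 f2; split.
- apply: is_derive_eq (is_deriveM (is_derive1_comp (is_derive_expR _) f1)
    (is_derive1_comp (is_derive_cos _) f2)) _.
  by rewrite /GRing.scale /= cReM /=; ring.
- apply: is_derive_eq (is_deriveM (is_derive1_comp (is_derive_expR _) f1)
    (is_derive1_comp (is_derive_sin _) f2)) _.
  by rewrite /GRing.scale /= cImM /=; ring.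
Qed.

Lemma is_cderive_log (th F : R -> C) x dF :
  (forall y, cexp (th y) = F y) ->
  {for x, continuous (fun y => complex.Im (th y))} ->
  is_cderive F x dF -> is_cderive th x (dF / F x).
Proof.
move=> thF hc [dp dq].
have hp y : complex.Re (F y) = expR (complex.Re (th y)) * cos (complex.Im (th y)).
  by rewrite -thF.
have hq y : complex.Im (F y) = expR (complex.Re (th y)) * sin (complex.Im (th y)).
  by rewrite -thF.
have N0 : complex.Re (F x) ^+ 2 + complex.Im (F x) ^+ 2 != 0.
  by apply: normsq_neq0; rewrite -thF cexp_neq0.
split.
- apply: is_derive_eq (is_derive_log_modulus hp hq dp dq) _.
  by rewrite cReM cReV cImV; field.
- apply: is_derive_eq (is_derive_continuous_argument hp hq hc dp dq) _.
  by rewrite cImM cReV cImV; field.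
Qed.

End ComplexCalculus.

Section ComplexIntegral.
Variables (R : realType) (d : measure_display) (T : measurableType d).
Variables (mu : {measure set T -> \bar R}) (D : set T).
Hypothesis mD : measurable D.
Notation C := R[i].

Lemma eq_cint (f g : T -> C) : (forall t, D t -> f t = g t) ->
  cint mu D f = cint mu D g.
Proof.
by move=> fg; congr (Complex _ _); apply: eq_Rintegral => t /set_mem/fg ->.
Qed.

Lemma eq_cintegrable (f g : T -> C) : (forall t, D t -> f t = g t) ->
  cintegrable mu D f -> cintegrable mu D g.
Proof.
move=> fg [f1 f2].
by split; [apply: eq_integrable f1 | apply: eq_integrable f2] => // t /set_mem/fg ->.
Qed.

Lemma cintegrableD (f g : T -> C) : cintegrable mu D f -> cintegrable mu D g ->
  cintegrable mu D (fun t => f t + g t).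
Proof.
case=> f1 f2 [g1 g2]; split.
- by apply: eq_integrable (integrableD mD f1 g1) => // t _; rewrite cReD.
- by apply: eq_integrable (integrableD mD f2 g2) => // t _; rewrite cImD.
Qed.

Lemma cintD (f g : T -> C) : cintegrable mu D f -> cintegrable mu D g ->
  cint mu D (fun t => f t + g t) = cint mu D f + cint mu D g.
Proof.
case=> f1 f2 [g1 g2]; rewrite /cint.
under eq_Rintegral do rewrite cReD.
under [X in Complex _ X]eq_Rintegral do rewrite cImD.
by rewrite !RintegralD.
Qed.

Lemma cintegrableMl (c : C) (f : T -> C) : cintegrable mu D f ->
  cintegrable mu D (fun t => c * f t).
Proof.
case=> f1 f2; split.
- apply: eq_integrable (integrableB mD (integrableZl mD _ f1) (integrableZl mD _ f2)) => // t _.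
  by rewrite cReM EFinB !EFinM.
- apply: eq_integrable (integrableD mD (integrableZl mD _ f2) (integrableZl mD _ f1)) => // t _.
  by rewrite cImM EFinD !EFinM.
Qed.

Lemma cintMl (c : C) (f : T -> C) : cintegrable mu D f ->
  cint mu D (fun t => c * f t) = c * cint mu D f.
Proof.
case=> f1 f2; rewrite /cint.
under eq_Rintegral do rewrite cReM.
under [X in Complex _ X]eq_Rintegral do rewrite cImM.
have scale (k : R) g : mu.-integrable D (EFin \o g) ->
    mu.-integrable D (EFin \o (fun t => k * g t)).
  by move=> /(integrableZl mD k); apply: eq_integrable => // t _; rewrite /= EFinM.
rewrite RintegralB ?RintegralD ?scale // !RintegralZl //.
by case: c.
Qed.

Variables (w K K' : T -> C).
Notation Z := (zint mu D w K K').
Notation Zi := (zintegrable mu D w K K').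

Lemma eq_zint F G : (forall t, D t -> F (K t) (K' t) = G (K t) (K' t)) -> Z F = Z G.
Proof. by move=> FG; apply: eq_cint => t /FG ->. Qed.

Lemma eq_zintegrable F G : (forall t, D t -> F (K t) (K' t) = G (K t) (K' t)) ->
  Zi F -> Zi G.
Proof. by move=> FG; apply: eq_cintegrable => t /FG ->. Qed.

Lemma zintegrable_lin (a b : C) F G : Zi F -> Zi G ->
  Zi (fun l l' => a * F l l' + b * G l l').
Proof.
move=> /(cintegrableMl a) hF /(cintegrableMl b) hG.
by apply: eq_cintegrable (cintegrableD hF hG) => t _; ring.
Qed.

Lemma zint_lin (a b : C) F G : Zi F -> Zi G ->
  Z (fun l l' => a * F l l' + b * G l l') = a * Z F + b * Z G.
Proof.
move=> hF hG; rewrite /zint -(cintMl a hF) -(cintMl b hG) -cintD; try exact: cintegrableMl.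
by apply: eq_cint => t _; ring.
Qed.

End ComplexIntegral.

Section PlaneWaves.
Variable R : realType.
Notation C := R[i].

Lemma rho_succ n x1 xm (k : C) : k != 0 -> rho (n + 1) x1 xm k = rho n x1 xm k * k.
Proof. by move=> k0; rewrite /rho expfzDr // expr1z mulrA. Qed.

Lemma rho_pred n x1 xm (k : C) : k != 0 -> rho (n - 1) x1 xm k = rho n x1 xm k * k^-1.
Proof. by move=> k0; rewrite /rho expfzDr // exprN1 mulrA. Qed.

Lemma sigma_succ n x1 xm (l : C) : l != 0 ->
  sigma (n + 1) x1 xm l = sigma n x1 xm l * (- l)^-1.
Proof. by move=> l0; rewrite /sigma opprD expfzDr ?oppr_eq0 // exprN1 mulrA. Qed.

Lemma sigma_pred n x1 xm (l : C) : l != 0 -> sigma (n - 1) x1 xm l = sigma n x1 xm l * - l.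
Proof. by move=> l0; rewrite /sigma opprB (addrC 1) expfzDr ?oppr_eq0 // expr1z mulrA. Qed.

Lemma is_cderive_wave1 (k c : C) (xm x1 : R) :
  is_cderive (fun y => cexp (k * y%:C + k^-1 * xm%:C) * c) x1
    (k * (cexp (k * x1%:C + k^-1 * xm%:C) * c)).
Proof.
apply: is_cderive_eq (is_cderiveM (is_cderive_cexp (is_cderiveD
  (is_cderiveMl k (is_cderive_id x1)) (is_cderive_cst _ x1))) (is_cderive_cst c x1)) _.
ring.
Qed.

Lemma is_cderive_wavem (k c : C) (x1 xm : R) :
  is_cderive (fun y => cexp (k * x1%:C + k^-1 * y%:C) * c) xm
    (k^-1 * (cexp (k * x1%:C + k^-1 * xm%:C) * c)).
Proof.
apply: is_cderive_eq (is_cderiveM (is_cderive_cexp (is_cderiveD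
  (is_cderive_cst _ xm) (is_cderiveMl k^-1 (is_cderive_id xm)))) (is_cderive_cst c xm)) _.
ring.
Qed.

Lemma is_cderive_rho1 n xm (k : C) x1 :
  is_cderive (fun y => rho n y xm k) x1 (k * rho n x1 xm k).
Proof. exact: is_cderive_wave1. Qed.

Lemma is_cderive_rhom n x1 (k : C) xm :
  is_cderive (fun y => rho n x1 y k) xm (k^-1 * rho n x1 xm k).
Proof. exact: is_cderive_wavem. Qed.

Lemma is_cderive_sigma1 n xm (l : C) x1 :
  is_cderive (fun y => sigma n y xm l) x1 (l * sigma n x1 xm l).
Proof. exact: is_cderive_wave1. Qed.

Lemma is_cderive_sigmam n x1 (l : C) xm :
  is_cderive (fun y => sigma n x1 y l) xm (l^-1 * sigma n x1 xm l).
Proof. exact: is_cderive_wavem. Qed.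

End PlaneWaves.

Section Toda.
Variables (R : realType) (d : measure_display) (T : measurableType d).
Variables (mu : {measure set T -> \bar R}) (D : set T) (w K K' : T -> R[i]).
Variable u : int -> R -> R -> R[i] -> int -> R[i].
Hypothesis mD : measurable D.
Hypothesis HD : forall t, D t -> admissible D K' (K t) /\ K' t != 0.
Hypothesis Hint : forall n x1 xm k i, admissible D K' k ->
  zintegrable mu D w K K' (eq_integrand u n k i x1 xm).
Hypothesis Hsol : forall n x1 xm k i, admissible D K' k ->
  u n x1 xm k i + zint mu D w K K' (eq_integrand u n k i x1 xm) = rho n x1 xm k * k ^ i.
Hypothesis Huniq : forall n x1 xm (v : R[i] -> R[i]),
  (forall k, admissible D K' k ->
     zintegrable mu D w K K'
       (fun l l' => rho n x1 xm k * Omega k l' * sigma n x1 xm l' * v l)) ->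
  (forall k, admissible D K' k ->
     v k + zint mu D w K K'
       (fun l l' => rho n x1 xm k * Omega k l' * sigma n x1 xm l' * v l) = 0) ->
  forall k, admissible D K' k -> v k = 0.
Hypothesis HUint : forall n x1 xm i j, zintegrable mu D w K K' (U_integrand u n i j x1 xm).
Hypothesis Hdu : forall n x1 xm k i, admissible D K' k ->
  cderivable (fun y => u n y xm k i) x1 /\ cderivable (fun y => u n x1 y k i) xm.
Hypothesis Hdeq : forall n k i, admissible D K' k ->
  diff_under1 mu D w K K' (eq_integrand u n k i) /\
  diff_underm mu D w K K' (eq_integrand u n k i).
Hypothesis HdU : forall n i j,
  diff_under1 mu D w K K' (U_integrand u n i j) /\
  diff_underm mu D w K K' (U_integrand u n i j).
Variable phi : int -> R -> R -> R[i].
Hypothesis Hphi : forall n x1 xm, cexp (phi n x1 xm) = 1 - Umat mu D w K K' u n x1 xm 0 (-1).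
Hypothesis Hphic : forall n x1 xm,
  ccontinuous (fun y => phi n y xm) /\ ccontinuous (fun y => phi n x1 y).

Notation C := R[i].
Notation Z := (zint mu D w K K').
Notation Zi := (zintegrable mu D w K K').
Notation adm := (admissible D K').
Notation U := (Umat mu D w K K' u).

Definition kernel_integrand n x1 xm (k : C) (f : C -> C) (l l' : C) : C :=
  rho n x1 xm k * Omega k l' * sigma n x1 xm l' * f l.

Definition solves_ie n x1 xm (f r : C -> C) : Prop :=
  forall k, adm k -> Zi (kernel_integrand n x1 xm k f) /\
    f k + Z (kernel_integrand n x1 xm k f) = r k.

Lemma solves_ie_u n x1 xm i :
  solves_ie n x1 xm (fun l => u n x1 xm l i) (fun k => rho n x1 xm k * k ^ i).
Proof. by move=> k ak; split; [apply: Hint | apply: Hsol]. Qed.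

Lemma solves_ie_lin n x1 xm (a b : C) f g rf rg :
  solves_ie n x1 xm f rf -> solves_ie n x1 xm g rg ->
  solves_ie n x1 xm (fun l => a * f l + b * g l) (fun k => a * rf k + b * rg k).
Proof.
move=> hf hg k ak; have [If Ef] := hf k ak; have [Ig Eg] := hg k ak.
pose F l l' := a * kernel_integrand n x1 xm k f l l' +
              b * kernel_integrand n x1 xm k g l l'.
have E t : D t -> F (K t) (K' t) =
    kernel_integrand n x1 xm k (fun l => a * f l + b * g l) (K t) (K' t).
  by move=> _; rewrite /F /kernel_integrand; ring.
split; first by apply: (eq_zintegrable mD E); apply: zintegrable_lin.
by rewrite -(eq_zint _ _ E) /F zint_lin // -Ef -Eg; ring.
Qed.

Lemma solves_ie_unique n x1 xm f g r :
  solves_ie n x1 xm f r -> solves_ie n x1 xm g r -> forall k, adm k -> f k = g k.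
Proof.
move=> hf hg k ak; have h := solves_ie_lin 1 (-1) hf hg.
have v0 : 1 * f k + -1 * g k = 0.
  apply: (Huniq (v := fun l => 1 * f l + -1 * g l)) ak => k' ak'.
    exact: (h k' ak').1.
  by rewrite (h k' ak').2; ring.
by apply/eqP; rewrite -subr_eq0 -v0 mul1r mulN1r.
Qed.

Lemma solves_ieE n x1 xm f r (a b : C) p q :
  solves_ie n x1 xm f r ->
  (forall k, adm k -> r k = a * (rho n x1 xm k * k ^ p) + b * (rho n x1 xm k * k ^ q)) ->
  forall k, adm k -> f k = a * u n x1 xm k p + b * u n x1 xm k q.
Proof.
move=> hf rE; apply: solves_ie_unique (solves_ie_lin a b (solves_ie_u _ _ _ p)
  (solves_ie_u _ _ _ q)).
by move=> k ak; have [If Ef] := hf k ak; split; rewrite // Ef rE.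
Qed.

Lemma solves_ie_shift n x1 xm f r (A : C -> C -> C -> C) (c : C -> C) m i j :
  (forall k, adm k -> Zi (A k)) ->
  (forall k, adm k -> f k + Z (A k) = r k) ->
  (forall k, adm k -> forall t, D t -> A k (K t) (K' t) =
     kernel_integrand n x1 xm k f (K t) (K' t) +
     c k * U_integrand u m i j x1 xm (K t) (K' t)) ->
  solves_ie n x1 xm f (fun k => r k - c k * U m x1 xm i j).
Proof.
move=> IA EA AE k ak.
pose F l l' := 1 * A k l l' + - c k * U_integrand u m i j x1 xm l l'.
have E t : D t -> F (K t) (K' t) = kernel_integrand n x1 xm k f (K t) (K' t).
  by move=> Dt; rewrite /F AE //; ring.
split.
  by apply: (eq_zintegrable mD E); apply: (zintegrable_lin mD _ _ (IA k ak)) (HUint _ _ _ _ _).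
rewrite -(eq_zint _ _ E) /F zint_lin //=; last exact: IA k ak.
by rewrite -(EA k ak) /Umat; ring.
Qed.

Lemma u_succ n x1 xm k i : adm k ->
  u (n + 1) x1 xm k i = u n x1 xm k (i + 1) - U (n + 1) x1 xm i 0 * u n x1 xm k 0.
Proof.
move=> ak.
have sh := @solves_ie_shift n x1 xm (fun l => u (n + 1) x1 xm l i) _
  (fun k => eq_integrand u (n + 1) k i x1 xm) (rho n x1 xm) (n + 1) i 0
  (fun k ak => Hint _ _ _ i ak) (fun k ak => Hsol _ _ _ i ak).
rewrite (solves_ieE (sh _) (a := 1) (b := - U (n + 1) x1 xm i 0) (p := i + 1) (q := 0)) //.
- by ring.
- move=> k' [k0 kD] t Dt; have [_ l0] := HD Dt; have kl := kD t Dt.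
  rewrite /eq_integrand /kernel_integrand /U_integrand /Omega rho_succ // sigma_succ //.
  by rewrite expr0z; field; rewrite kl l0.
- by move=> k' [k0 _]; rewrite rho_succ // expfzDr // expr1z expr0z; ring.
Qed.

Lemma u_pred n x1 xm k : adm k ->
  u (n - 1) x1 xm k 0 = (1 - U (n - 1) x1 xm 0 (-1)) * u n x1 xm k (-1).
Proof.
move=> ak.
have sh := @solves_ie_shift n x1 xm (fun l => u (n - 1) x1 xm l 0) _
  (fun k => eq_integrand u (n - 1) k 0 x1 xm) (fun k => rho n x1 xm k * k^-1)
  (n - 1) 0 (-1) (fun k ak => Hint _ _ _ 0 ak) (fun k ak => Hsol _ _ _ 0 ak).
rewrite (solves_ieE (sh _) (a := 1 - U (n - 1) x1 xm 0 (-1)) (b := 0) (p := -1) (q := -1)) //.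
- by ring.
- move=> k' [k0 kD] t Dt; have [_ l0] := HD Dt; have kl := kD t Dt.
  rewrite /eq_integrand /kernel_integrand /U_integrand /Omega rho_pred // sigma_pred //.
  by rewrite exprN1; field; rewrite kl l0 k0.
- by move=> k' [k0 _]; rewrite rho_pred // expr0z exprN1; ring.
Qed.

Lemma Umat_lin n x1 xm (a b : C) i1 j1 i2 j2 :
  Z (fun l l' => a * U_integrand u n i1 j1 x1 xm l l' + b * U_integrand u n i2 j2 x1 xm l l')
  = a * U n x1 xm i1 j1 + b * U n x1 xm i2 j2.
Proof. exact: zint_lin. Qed.

Lemma Umat_lin3 n x1 xm (a b c : C) i1 j1 i2 j2 i3 j3 :
  Z (fun l l' => a * U_integrand u n i1 j1 x1 xm l l' + b * U_integrand u n i2 j2 x1 xm l l'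
                 + c * U_integrand u n i3 j3 x1 xm l l')
  = a * U n x1 xm i1 j1 + b * U n x1 xm i2 j2 + c * U n x1 xm i3 j3.
Proof.
have I12 := zintegrable_lin mD a b (HUint n x1 xm i1 j1) (HUint n x1 xm i2 j2).
transitivity (Z (fun l l' => 1 * (a * U_integrand u n i1 j1 x1 xm l l' +
    b * U_integrand u n i2 j2 x1 xm l l') + c * U_integrand u n i3 j3 x1 xm l l')).
  by apply: eq_zint => t _; ring.
by rewrite (zint_lin mD _ _ I12 (HUint n x1 xm i3 j3)) Umat_lin /Umat; ring.
Qed.

Lemma Umat_succ00 n x1 xm :
  U (n + 1) x1 xm 0 0 * (1 - U n x1 xm 0 (-1)) = - U n x1 xm 1 (-1).
Proof.
suff : U (n + 1) x1 xm 0 0 =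
    -1 * U n x1 xm 1 (-1) + U (n + 1) x1 xm 0 0 * U n x1 xm 0 (-1).
  by move=> E; rewrite mulrBr mulr1 {1}E; ring.
rewrite -Umat_lin [LHS]/Umat; apply: eq_zint => t Dt; have [aK l0] := HD Dt.
rewrite /U_integrand u_succ // add0r sigma_succ // !expr0z exprN1.
by field; rewrite l0.
Qed.

Lemma Umat_succ0N1 n x1 xm :
  U (n + 1) x1 xm 0 (-1) = - U n x1 xm 1 (-2) + U (n + 1) x1 xm 0 0 * U n x1 xm 0 (-2).
Proof.
suff -> : U (n + 1) x1 xm 0 (-1) =
    -1 * U n x1 xm 1 (-2) + U (n + 1) x1 xm 0 0 * U n x1 xm 0 (-2) by ring.
rewrite -Umat_lin [LHS]/Umat; apply: eq_zint => t Dt; have [aK l0] := HD Dt.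
have e2 : K' t ^ (-2) = (K' t)^-1 * (K' t)^-1.
  by rewrite -exprN1 -expfzDr.
rewrite /U_integrand u_succ // add0r sigma_succ // e2 exprN1.
by field; rewrite l0.
Qed.

Lemma Umat_pred0N1 n x1 xm :
  (1 - U (n - 1) x1 xm 0 (-1)) * (1 - U n x1 xm (-1) 0) = 1.
Proof.
suff : U (n - 1) x1 xm 0 (-1) =
    - (1 - U (n - 1) x1 xm 0 (-1)) * U n x1 xm (-1) 0 + 0 * U n x1 xm (-1) 0.
  by move=> E; rewrite mulrBr mulr1 {1}E; ring.
rewrite -Umat_lin [LHS]/Umat; apply: eq_zint => t Dt; have [aK l0] := HD Dt.
rewrite /U_integrand u_pred // sigma_pred // !expr0z exprN1.
by field; rewrite l0.
Qed.

Lemma pd1_ie n x1 xm k i : adm k ->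
  pd1 (fun a b => u n a b k i) x1 xm +
  Z (fun l l' => pd1 (fun a b => eq_integrand u n k i a b l l') x1 xm) =
  k * (rho n x1 xm k * k ^ i).
Proof.
move=> ak; have [_ [_ [dZ <-]]] := (Hdeq n i ak).1 x1 xm.
apply: is_cderive_unique (is_cderiveD (cderivableP (Hdu n x1 xm i ak).1) (cderivableP dZ)) _.
apply: eq_is_cderive (fun y => esym (Hsol n y xm i ak)) _.
by apply: is_cderive_eq (is_cderiveM (is_cderive_rho1 n xm k x1) (is_cderive_cst _ x1)) _; ring.
Qed.

Lemma pdm_ie n x1 xm k i : adm k ->
  pdm (fun a b => u n a b k i) x1 xm +
  Z (fun l l' => pdm (fun a b => eq_integrand u n k i a b l l') x1 xm) =
  k^-1 * (rho n x1 xm k * k ^ i).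
Proof.
move=> ak; have [_ [_ [dZ <-]]] := (Hdeq n i ak).2 x1 xm.
apply: is_cderive_unique (is_cderiveD (cderivableP (Hdu n x1 xm i ak).2) (cderivableP dZ)) _.
apply: eq_is_cderive (fun y => esym (Hsol n x1 y i ak)) _.
by apply: is_cderive_eq (is_cderiveM (is_cderive_rhom n x1 k xm) (is_cderive_cst _ xm)) _; ring.
Qed.

(* The kernel reproduces itself under differentiation: [d/dx_1] multiplies
   [rho_n(k) Omega(k,l') sigma_n(l')] by [k + l'], which cancels [Omega]. *)
Lemma pd1_eq_integrand n x1 xm k i l l' : adm l -> k + l' != 0 ->
  pd1 (fun a b => eq_integrand u n k i a b l l') x1 xm =
  kernel_integrand n x1 xm k (fun l => pd1 (fun a b => u n a b l i) x1 xm) l l' +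
  rho n x1 xm k * U_integrand u n i 0 x1 xm l l'.
Proof.
move=> al kl; rewrite /pd1 /eq_integrand (cderiveE (is_cderiveM (is_cderiveM (is_cderiveM
  (is_cderive_rho1 n xm k x1) (is_cderive_cst (Omega k l') x1))
  (is_cderive_sigma1 n xm l' x1)) (cderivableP (Hdu n x1 xm i al).1))).
by rewrite /kernel_integrand /U_integrand /pd1 /Omega expr0z; field.
Qed.

Lemma pdm_eq_integrand n x1 xm k i l l' : adm l -> k != 0 -> l' != 0 -> k + l' != 0 ->
  pdm (fun a b => eq_integrand u n k i a b l l') x1 xm =
  kernel_integrand n x1 xm k (fun l => pdm (fun a b => u n a b l i) x1 xm) l l' +
  rho n x1 xm k * k^-1 * U_integrand u n i (-1) x1 xm l l'.
Proof.
move=> al k0 l0 kl; rewrite /pdm /eq_integrand (cderiveE (is_cderiveM (is_cderiveM (is_cderiveM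
  (is_cderive_rhom n x1 k xm) (is_cderive_cst (Omega k l') xm))
  (is_cderive_sigmam n x1 l' xm)) (cderivableP (Hdu n x1 xm i al).2))).
by rewrite /kernel_integrand /U_integrand /pdm /Omega exprN1; field; rewrite k0 l0.
Qed.

Lemma is_cderive_u1 n x1 xm k i : adm k ->
  is_cderive (fun y => u n y xm k i) x1
    (u n x1 xm k (i + 1) - U n x1 xm i 0 * u n x1 xm k 0).
Proof.
move=> ak; apply: is_cderive_eq (cderivableP (Hdu n x1 xm i ak).1) _.
have sh := @solves_ie_shift n x1 xm (fun l => pd1 (fun a b => u n a b l i) x1 xm) _
  (fun k l l' => pd1 (fun a b => eq_integrand u n k i a b l l') x1 xm) (rho n x1 xm) n i 0
  (fun k ak => ((Hdeq n i ak).1 x1 xm).2.1) (fun k ak => @pd1_ie n x1 xm k i ak).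
rewrite -/(pd1 (fun a b => u n a b k i) x1 xm).
rewrite (solves_ieE (sh _) (a := 1) (b := - U n x1 xm i 0) (p := i + 1) (q := 0)) //.
- by ring.
- by move=> k' [_ kD] t Dt; apply: pd1_eq_integrand (HD Dt).1 (kD t Dt).
- by move=> k' [k0 _]; rewrite expfzDr // expr1z expr0z; ring.
Qed.

Lemma is_cderive_um n x1 xm k i : adm k ->
  is_cderive (fun y => u n x1 y k i) xm
    (u n x1 xm k (i - 1) - U n x1 xm i (-1) * u n x1 xm k (-1)).
Proof.
move=> ak; apply: is_cderive_eq (cderivableP (Hdu n x1 xm i ak).2) _.
have sh := @solves_ie_shift n x1 xm (fun l => pdm (fun a b => u n a b l i) x1 xm) _
  (fun k l l' => pdm (fun a b => eq_integrand u n k i a b l l') x1 xm)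
  (fun k => rho n x1 xm k * k^-1) n i (-1)
  (fun k ak => ((Hdeq n i ak).2 x1 xm).2.1) (fun k ak => @pdm_ie n x1 xm k i ak).
rewrite -/(pdm (fun a b => u n a b k i) x1 xm).
rewrite (solves_ieE (sh _) (a := 1) (b := - U n x1 xm i (-1)) (p := i - 1) (q := -1)) //.
- by ring.
- move=> k' [k0 kD] t Dt.
  by apply: pdm_eq_integrand (HD Dt).1 k0 (HD Dt).2 (kD t Dt).
- by move=> k' [k0 _]; rewrite expfzDr // exprN1; ring.
Qed.

Lemma is_cderive_U1 n x1 xm i j :
  is_cderive (fun y => U n y xm i j) x1
    (U n x1 xm (i + 1) j - U n x1 xm i 0 * U n x1 xm 0 j + U n x1 xm i (j + 1)).
Proof.
have [_ [_ [dZ eZ]]] := (HdU n i j).1 x1 xm.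
apply: is_cderive_eq (cderivableP dZ) _.
rewrite -/(pd1 (fun a b => Z (U_integrand u n i j a b)) x1 xm) eZ.
transitivity (1 * U n x1 xm (i + 1) j + - U n x1 xm i 0 * U n x1 xm 0 j +
  1 * U n x1 xm i (j + 1)); last by ring.
rewrite -Umat_lin3; apply: eq_zint => t Dt; have [aK l0] := HD Dt.
rewrite /pd1 /U_integrand (cderiveE (is_cderiveM (is_cderiveM (is_cderive_u1 n x1 xm i aK)
  (is_cderive_cst (K' t ^ j) x1)) (is_cderive_sigma1 n xm (K' t) x1))).
by rewrite expfzDr // expr1z; ring.
Qed.

Lemma is_cderive_Um n x1 xm i j :
  is_cderive (fun y => U n x1 y i j) xm
    (U n x1 xm (i - 1) j - U n x1 xm i (-1) * U n x1 xm (-1) j + U n x1 xm i (j - 1)).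
Proof.
have [_ [_ [dZ eZ]]] := (HdU n i j).2 x1 xm.
apply: is_cderive_eq (cderivableP dZ) _.
rewrite -/(pdm (fun a b => Z (U_integrand u n i j a b)) x1 xm) eZ.
transitivity (1 * U n x1 xm (i - 1) j + - U n x1 xm i (-1) * U n x1 xm (-1) j +
  1 * U n x1 xm i (j - 1)); last by ring.
rewrite -Umat_lin3; apply: eq_zint => t Dt; have [aK l0] := HD Dt.
rewrite /pdm /U_integrand (cderiveE (is_cderiveM (is_cderiveM (is_cderive_um n x1 xm i aK)
  (is_cderive_cst (K' t ^ j) xm)) (is_cderive_sigmam n x1 (K' t) xm))).
by rewrite expfzDr // exprN1; ring.
Qed.

Lemma oneBUmat_neq0 n x1 xm : 1 - U n x1 xm 0 (-1) != 0.
Proof. by rewrite -Hphi cexp_neq0. Qed.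

Lemma is_cderive_phi1 n x1 xm :
  is_cderive (fun y => phi n y xm) x1 (U (n + 1) x1 xm 0 0 - U n x1 xm 0 0).
Proof.
have := is_cderive_log (fun y => Hphi n y xm) ((Hphic n x1 xm).1.2 x1)
  (is_cderiveB (is_cderive_cst 1 x1) (is_cderive_U1 n x1 xm 0 (-1))).
rewrite (_ : 0 + 1 = 1 :> int) // (_ : -1 + 1 = 0 :> int) // => h.
apply: is_cderive_eq h _; have V0 := oneBUmat_neq0 n x1 xm.
have -> : U (n + 1) x1 xm 0 0 = - U n x1 xm 1 (-1) / (1 - U n x1 xm 0 (-1)).
  by rewrite -Umat_succ00 mulfK.
by field.
Qed.

Lemma is_cderive_phim n x1 xm :
  is_cderive (fun y => phi n x1 y) xm
    (- U n x1 xm (-1) (-1) - U n x1 xm 0 (-2) / (1 - U n x1 xm 0 (-1))).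
Proof.
have := is_cderive_log (fun y => Hphi n x1 y) ((Hphic n x1 xm).2.2 xm)
  (is_cderiveB (is_cderive_cst 1 xm) (is_cderive_Um n x1 xm 0 (-1))).
rewrite (_ : 0 - 1 = -1 :> int) // (_ : -1 - 1 = -2 :> int) // => h.
apply: is_cderive_eq h _; have V0 := oneBUmat_neq0 n x1 xm.
by field.
Qed.

Lemma wave_function_linear_problem n x1 xm k : adm k ->
  cderivable (fun y => phi n y xm) x1 /\
  pd1 (fun a b => u n a b k 0) x1 xm =
    pd1 (phi n) x1 xm * u n x1 xm k 0 + u (n + 1) x1 xm k 0 /\
  pdm (fun a b => u n a b k 0) x1 xm =
    cexp (phi n x1 xm - phi (n - 1) x1 xm) * u (n - 1) x1 xm k 0.
Proof.
move=> ak; split; first exact: is_cderive_cderivable (is_cderive_phi1 n x1 xm).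
split.
- rewrite /pd1 (cderiveE (is_cderive_u1 n x1 xm 0 ak)).
  by rewrite (cderiveE (is_cderive_phi1 n x1 xm)) u_succ // add0r; ring.
- rewrite /pdm (cderiveE (is_cderive_um n x1 xm 0 ak)) u_pred //.
  rewrite -(Hphi (n - 1)) mulrA -cexpD subrK Hphi (_ : 0 - 1 = -1 :> int) //; ring.
Qed.

Lemma toda_equation n x1 xm :
  cderivable (fun y => phi n x1 y) xm /\
  cderivable (fun y => pdm (phi n) y xm) x1 /\
  pd1 (pdm (phi n)) x1 xm =
    cexp (phi n x1 xm - phi (n - 1) x1 xm) - cexp (phi (n + 1) x1 xm - phi n x1 xm).
Proof.
split; first exact: is_cderive_cderivable (is_cderive_phim n x1 xm).
have pdmE y : pdm (phi n) y xm =
    - U n y xm (-1) (-1) - U n y xm 0 (-2) * cexp (- phi n y xm).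
  by rewrite /pdm (cderiveE (is_cderive_phim n y xm)) cexpN Hphi.
have := is_cderiveB (is_cderiveN (is_cderive_U1 n x1 xm (-1) (-1)))
  (is_cderiveM (is_cderive_U1 n x1 xm 0 (-2))
     (is_cderive_cexp (is_cderiveN (is_cderive_phi1 n x1 xm)))).
move=> /(eq_is_cderive (fun y => esym (pdmE y))) d1.
split; first exact: is_cderive_cderivable d1.
have e1 : cexp (phi n x1 xm - phi (n - 1) x1 xm) =
    (1 - U n x1 xm 0 (-1)) * (1 - U n x1 xm (-1) 0).
  by rewrite cexpD cexpN !Hphi (mulr1_eq (Umat_pred0N1 n x1 xm)).
have e2 : cexp (phi (n + 1) x1 xm - phi n x1 xm) =
    (1 - U (n + 1) x1 xm 0 (-1)) / (1 - U n x1 xm 0 (-1)).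
  by rewrite cexpD cexpN !Hphi.
rewrite /pd1 (cderiveE d1) e1 e2 cexpN Hphi Umat_succ0N1.
rewrite (_ : -1 + 1 = 0 :> int) // (_ : 0 + 1 = 1 :> int) // (_ : -2 + 1 = -1 :> int) //.
by have V0 := oneBUmat_neq0 n x1 xm; field.
Qed.

End Toda.

Theorem theorem3p1 (R : realType) (d : measure_display) (T : measurableType d)
  (mu : {measure set T -> \bar R}) (D : set T) (w K K' : T -> R[i])
  (u : int -> R -> R -> R[i] -> int -> R[i])
  (phi : int -> R -> R -> R[i])
  (mD : measurable D)
  (* nondegeneracy of the integration domain *)
  (HD : forall t, D t -> admissible D K' (K t) /\ K' t != 0)
  (* u solves the linear integral equation (componentwise) *)
  (Hint : forall n x1 xm k i, admissible D K' k ->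
     zintegrable mu D w K K' (eq_integrand u n k i x1 xm))
  (Hsol : forall n x1 xm k i, admissible D K' k ->
     u n x1 xm k i + zint mu D w K K' (eq_integrand u n k i x1 xm)
       = rho n x1 xm k * k ^ i)
  (* the homogeneous equation has only the zero solution *)
  (Huniq : forall n x1 xm (v : R[i] -> R[i]),
     (forall k, admissible D K' k ->
        zintegrable mu D w K K'
          (fun l l' => rho n x1 xm k * Omega k l' * sigma n x1 xm l' * v l)) ->
     (forall k, admissible D K' k ->
        v k + zint mu D w K K'
          (fun l l' => rho n x1 xm k * Omega k l' * sigma n x1 xm l' * v l) = 0) ->
     forall k, admissible D K' k -> v k = 0)
  (* U_n is well defined *)
  (HUint : forall n x1 xm i j, zintegrable mu D w K K' (U_integrand u n i j x1 xm))
  (* tacit regularity: u is differentiable in x_1, x_{-1}, and the integrals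
     may be differentiated under the integral sign *)
  (Hdu : forall n x1 xm k i, admissible D K' k ->
     cderivable (fun y => u n y xm k i) x1 /\ cderivable (fun y => u n x1 y k i) xm)
  (Hdeq : forall n k i, admissible D K' k ->
     diff_under1 mu D w K K' (eq_integrand u n k i) /\
     diff_underm mu D w K K' (eq_integrand u n k i))
  (HdU : forall n i j,
     diff_under1 mu D w K K' (U_integrand u n i j) /\
     diff_underm mu D w K K' (U_integrand u n i j))
  (* phi_n = ln(1 - U_n^(0,-1)) : a continuous logarithm *)
  (Hphi : forall n x1 xm, cexp (phi n x1 xm) = 1 - Umat mu D w K K' u n x1 xm 0 (-1))
  (Hphic : forall n x1 xm,
     ccontinuous (fun y => phi n y xm) /\ ccontinuous (fun y => phi n x1 y)) :
  (* two-dimensional Toda equation *)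
  (forall n x1 xm,
     cderivable (fun y => phi n x1 y) xm /\
     cderivable (fun y => pdm (phi n) y xm) x1 /\
     pd1 (pdm (phi n)) x1 xm =
       cexp (phi n x1 xm - phi (n - 1) x1 xm) - cexp (phi (n + 1) x1 xm - phi n x1 xm))
  /\
  (* linear problem for the wave function phi_n = [u_n(k)]^(0) *)
  (forall n x1 xm k, admissible D K' k ->
     cderivable (fun y => phi n y xm) x1 /\
     pd1 (fun a b => u n a b k 0) x1 xm =
       pd1 (phi n) x1 xm * u n x1 xm k 0 + u (n + 1) x1 xm k 0 /\
     pdm (fun a b => u n a b k 0) x1 xm =
       cexp (phi n x1 xm - phi (n - 1) x1 xm) * u (n - 1) x1 xm k 0).
Proof.
split=> [n x1 xm | n x1 xm k ak].
- exact: (toda_equation mD HD Hint Hsol Huniq HUint Hdu Hdeq HdU Hphi Hphic).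
- exact: (wave_function_linear_problem mD HD Hint Hsol Huniq HUint Hdu Hdeq HdU Hphi Hphic).
Qed.
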